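(* Let $N\ge 1$, let $\lambda_1,\dots,\lambda_N$ be distinct nonzero real numbers and $\Lambda=\operatorname{diag}(\lambda_1,\dots,\lambda_N)$. Let $u,f,g$ be smooth complex-valued functions and $v_1,v_2$ smooth real-valued functions of $(x,y,t)$ on a domain. Suppose that for each $\alpha=1,\dots,N$ the vector $F_\alpha=(\phi_{1\alpha},\phi_{2\alpha},\phi_{3\alpha})^T$ is a smooth solution of the Lax system $$F_{\alpha,x}=W^x(\lambda_\alpha)F_\alpha,\qquad F_{\alpha,y}=W^y(\lambda_\alpha)F_\alpha,\qquad F_{\alpha,t}=W^t(\lambda_\alpha)F_\alpha .$$ Then the Lax equations $$L_x(\lambda)=[W^x(\lambda),L(\lambda)],\qquad L_y(\lambda)=[W^y(\lambda),L(\lambda)],\qquad L_t(\lambda)=[W^t(\lambda),L(\lambda)]$$ hold for all $\lambda\in\mathbb C\setminus\{\lambda_1,\dots,\lambda_N\}$ if and only if $$\langle\Phi_2,\Phi_1\rangle=-\mathrm{i}\,u,\qquad \langle\Phi_3,\Phi_1\rangle=f,\qquad \langle\Phi_3,\Phi_2\rangle=-g .$$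
   Context: Notation: $\Phi_j=(\phi_{j1},\dots,\phi_{jN})^T\in\mathbb C^N$ for $j=1,2,3$; for $V,W\in\mathbb C^N$, $\langle V,W\rangle=V^*W=\sum_\alpha \bar V_\alpha W_\alpha$, so $\langle\Phi_i,\Lambda^m\Phi_j\rangle=\sum_{\alpha=1}^N\lambda_\alpha^m\bar\phi_{i\alpha}\phi_{j\alpha}$. The Lax matrices are $$W^x(\lambda)=\begin{pmatrix}\mathrm{i}\lambda&0&\mathrm{i}f\\0&\mathrm{i}\lambda&\mathrm{i}g\\ \mathrm{i}\bar f&\mathrm{i}\bar g&0\end{pmatrix},\qquad W^y(\lambda)=\begin{pmatrix}\mathrm{i}\lambda&u&\mathrm{i}f\\-\bar u&-\mathrm{i}\lambda&-\mathrm{i}g\\ \mathrm{i}\bar f&-\mathrm{i}\bar g&0\end{pmatrix},$$ $$W^t(\lambda)=\begin{pmatrix}-2\mathrm{i}\lambda^2+\mathrm{i}|u|^2+\mathrm{i}v_1 & -2u\lambda+\mathrm{i}u_y & -2\mathrm{i}f\lambda-2f_y\\ 2\bar u\lambda+\mathrm{i}\bar u_y & 2\mathrm{i}\lambda^2-\mathrm{i}|u|^2-\mathrm{i}v_2 & 2\mathrm{i}g\lambda-2g_y\\ -2\mathrm{i}\bar f\lambda+2\bar f_y & 2\mathrm{i}\bar g\lambda+2\bar g_y & -2\mathrm{i}(|f|^2-|g|^2)\end{pmatrix}.$$ The matrix $L(\lambda)$ is $$L(\lambda)=C+\sum_{\alpha=1}^N\frac{1}{\lambda-\lambda_\alpha}F_\alpha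 F_\alpha^*,\qquad C=\operatorname{diag}(1,-1,0),$$ i.e. $L(\lambda)_{ab}=C_{ab}+\sum_\alpha \phi_{a\alpha}\bar\phi_{b\alpha}/(\lambda-\lambda_\alpha)$. *)

(* Complex numbers are Coquelicot's [C] (= R*R),
   viewed as a normed module over R for partial derivatives. *)
From Stdlib Require Import Reals.
From Coquelicot Require Import Coquelicot.
Open Scope R_scope.

Fixpoint csum (n : nat) (F : nat -> C) : C :=
  match n with
  | O => RtoC 0
  | S m => Cplus (csum m F) (F m)
  end.

(* 3x3 complex matrices, indices 0,1,2 (paper's 1,2,3). *)
Definition mat3 := nat -> nat -> C.

Definition mmul (A B : mat3) : mat3 :=
  fun a b => csum 3 (fun c => Cmult (A a c) (B c b)).

Definition comm (A B : mat3) : mat3 :=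
  fun a b => Cminus (mmul A B a b) (mmul B A a b).

Definition mk3 (m00 m01 m02 m10 m11 m12 m20 m21 m22 : C) : mat3 :=
  fun a b =>
    match a, b with
    | 0, 0 => m00 | 0, 1 => m01 | 0, 2 => m02
    | 1, 0 => m10 | 1, 1 => m11 | 1, 2 => m12
    | 2, 0 => m20 | 2, 1 => m21 | 2, 2 => m22
    | _, _ => RtoC 0
    end%nat.

Notation "'ii'" := Ci.

Definition Wx (lam : C) (f g : C) : mat3 :=
  mk3 (ii * lam) 0 (ii * f)
      0 (ii * lam) (ii * g)
      (ii * Cconj f) (ii * Cconj g) 0.

Definition Wy (lam : C) (u f g : C) : mat3 :=
  mk3 (ii * lam) u (ii * f)
      (- Cconj u) (- (ii * lam)) (- (ii * g))
      (ii * Cconj f) (- (ii * Cconj g)) 0.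

Definition csq (z : C) : C := Cmult z (Cconj z).

(* W^t(lambda); uy, fy, gy are the y-derivatives of u, f, g;
   conj(u_y) = (conj u)_y etc. *)
Definition Wt (lam : C) (u uy f fy g gy : C) (v1 v2 : R) : mat3 :=
  mk3 (- (2 * ii * lam * lam) + ii * csq u + ii * RtoC v1)
      (- (2 * u * lam) + ii * uy)
      (- (2 * ii * f * lam) - 2 * fy)
      (2 * Cconj u * lam + ii * Cconj uy)
      (2 * ii * lam * lam - ii * csq u - ii * RtoC v2)
      (2 * ii * g * lam - 2 * gy)
      (- (2 * ii * Cconj f * lam) + 2 * Cconj fy)
      (2 * ii * Cconj g * lam + 2 * Cconj gy)
      (- (2 * ii * (csq f - csq g))).

Definition Cdiag : mat3 := mk3 1 0 0  0 (-1) 0  0 0 0.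

(* L(lambda) = C + sum_alpha F_alpha F_alpha^* / (lambda - lambda_alpha),
   where ph a al = phi_{a+1, al+1} at the current point. *)
Definition Lmat (N : nat) (lams : nat -> R) (ph : nat -> nat -> C) (lam : C)
  : mat3 :=
  fun a b => Cplus (Cdiag a b)
    (csum N (fun al => Cdiv (Cmult (ph a al) (Cconj (ph b al)))
                            (Cminus lam (RtoC (lams al))))).

Definition cinner (N : nat) (ph : nat -> nat -> C) (i j : nat) : C :=
  csum N (fun al => Cmult (Cconj (ph i al)) (ph j al)).

Definition has_pdx (F : R -> R -> R -> C) (x y t : R) (l : C) : Prop :=
  is_derive (fun s => F s y t) x l.
Definition has_pdy (F : R -> R -> R -> C) (x y t : R) (l : C) : Prop :=
  is_derive (fun s => F x s t) y l.
Definition has_pdt (F : R -> R -> R -> C) (x y t : R) (l : C) : Prop :=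
  is_derive (fun s => F x y s) t l.

Definition mvec (A : mat3) (v : nat -> C) (a : nat) : C :=
  csum 3 (fun c => Cmult (A a c) (v c)).

Definition open3 (D : R -> R -> R -> Prop) : Prop :=
  @open (prod_UniformSpace (prod_UniformSpace R_UniformSpace R_UniformSpace)
           R_UniformSpace)
    (fun p => D (fst (fst p)) (snd (fst p)) (snd p)).

Definition at_pt (phi : nat -> nat -> R -> R -> R -> C) (x y t : R)
  : nat -> nat -> C := fun a al => phi a al x y t.

Definition Lfun (N : nat) (lams : nat -> R) (phi : nat -> nat -> R -> R -> R -> C)
  (lam : C) (a b : nat) : R -> R -> R -> C :=
  fun x y t => Lmat N lams (at_pt phi x y t) lam a b.

From Stdlib Require Import Reals Lra Lia.
From Coquelicot Require Import Coquelicot.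
Open Scope R_scope.

(* For real lambda_al the matrices W(lambda_al) are skew-Hermitian, so the Lax
   system gives d(F_al F_al^* ) = [W(lambda_al), F_al F_al^* ] and hence
   dL = sum_al [W(lambda_al), F_al F_al^* ] / (lambda - lambda_al).  Since
   W(lambda) - W(lambda_al) is divisible by lambda - lambda_al, the defect
   [W(lambda), L] - dL is polynomial in lambda: it is [W(lambda), C] plus
   commutators with the Gram matrix M = sum_al F_al F_al^* and, for t, with
   sum_al lambda_al F_al F_al^*.  The x- and y-defects vanish iff the
   off-diagonal entries of M are -iu, f, -g; the t-defect then vanishes too,
   because the y-system determines the lambda-weighted Gram matrix through the
   y-derivative of M. *)

Lemma Cconj_RtoC (r : R) : Cconj (RtoC r) = RtoC r.
Proof. unfold Cconj, RtoC; simpl; f_equal; ring. Qed.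

Lemma Ci_neq_RtoC (r : R) : Ci <> RtoC r.
Proof. intros E; apply (f_equal snd) in E; simpl in E; lra. Qed.

Lemma Cmult_eq0_l (k z : C) : k <> 0%C -> (k * z = 0)%C -> z = 0%C.
Proof.
  intros Hk Hz.
  replace z with (/ k * (k * z))%C by (field; exact Hk).
  rewrite Hz; ring.
Qed.

Lemma Cconj_Ci : Cconj Ci = (- Ci)%C.
Proof. unfold Cconj, Ci, Copp; simpl; f_equal; ring. Qed.

Lemma Ci_pow2 : (Ci ^ 2 = - (1))%C.
Proof. apply injective_projections; simpl; ring. Qed.

Lemma Ci_pow3 : (Ci ^ 3 = - Ci)%C.
Proof. apply injective_projections; simpl; ring. Qed.

Lemma Ci_pow4 : (Ci ^ 4 = 1)%C.
Proof. apply injective_projections; simpl; ring. Qed.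

Ltac push_conj :=
  repeat rewrite ?Cplus_conj, ?Cmult_conj, ?Copp_conj, ?Cminus_conj,
    ?Cconj_conj, ?Cconj_RtoC.

(* [iring] normalises in C using [Ci^2 = -1]; [cring] splits into real and
   imaginary parts, which also handles [csq], but is much slower on large goals. *)
Ltac iring :=
  push_conj; rewrite ?Cconj_Ci; ring_simplify;
  rewrite ?Ci_pow2, ?Ci_pow3, ?Ci_pow4; ring.

Ltac cring :=
  apply injective_projections;
  unfold Cconj, Cplus, Cminus, Cmult, Copp, Ci, RtoC, csq; simpl; ring.

(** * Derivatives of complex-valued functions of a real variable *)

Lemma is_derive_C (f : R -> C) (x : R) (l : C) :
  is_derive f x l <->
  is_derive (fun s => fst (f s)) x (fst l) /\ is_derive (fun s => snd (f s)) x (snd l).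
Proof.
  unfold is_derive. split.
  - intros H. split.
    + eapply filterdiff_ext_lin.
      * apply (filterdiff_comp' f
          (fun p : prod_NormedModule R_AbsRing R_NormedModule R_NormedModule => fst p)
          x _ (fun p => fst p) H).
        apply filterdiff_linear, is_linear_fst.
      * reflexivity.
    + eapply filterdiff_ext_lin.
      * apply (filterdiff_comp' f
          (fun p : prod_NormedModule R_AbsRing R_NormedModule R_NormedModule => snd p)
          x _ (fun p => snd p) H).
        apply filterdiff_linear, is_linear_snd.
      * reflexivity.
  - intros [H1 H2].
    apply (filterdiff_ext (fun s => (fst (f s), snd (f s)))).
    { intros s; destruct (f s); reflexivity. }
    eapply filterdiff_ext_lin.
    + apply (filterdiff_comp_2 (fun s => fst (f s)) (fun s => snd (f s))
        (fun a b => (a, b) : prod_NormedModule R_AbsRing R_NormedModule R_NormedModule)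
        _ _ (fun a b => (a, b)) H1 H2).
      apply (filterdiff_linear
        (fun p : prod_NormedModule R_AbsRing R_NormedModule R_NormedModule => (fst p, snd p))).
      apply is_linear_prod; [apply is_linear_fst | apply is_linear_snd].
    + reflexivity.
Qed.

Lemma is_derive_eq (f : R -> C) (x : R) (l l' : C) :
  is_derive f x l -> l = l' -> is_derive f x l'.
Proof. intros H ->; exact H. Qed.

Lemma is_derive_Cunique (f : R -> C) (x : R) (l l' : C) :
  is_derive f x l -> is_derive f x l' -> l = l'.
Proof.
  rewrite !is_derive_C; intros [F1 F2] [G1 G2].
  apply is_derive_unique in F1, F2, G1, G2.
  destruct l, l'; simpl in *; congruence.
Qed.

Lemma is_derive_shift_iff (f : R -> C) (x : R) (l d : C) :
  is_derive f x l -> (is_derive f x (l + d)%C <-> d = 0%C).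
Proof.
  intros H; split.
  - intros Hd. assert (E := is_derive_Cunique _ _ _ _ H Hd).
    replace d with ((l + d) - l)%C by ring. rewrite <- E; ring.
  - intros ->. replace (l + 0)%C with l by ring. exact H.
Qed.

Lemma is_derive_Cconst (k : C) (x : R) : is_derive (fun _ : R => k) x (RtoC 0).
Proof.
  exact (is_derive_const (K := R_AbsRing)
    (V := prod_NormedModule R_AbsRing R_NormedModule R_NormedModule) k x).
Qed.

Lemma is_derive_Cplus (f g : R -> C) (x : R) (df dg : C) :
  is_derive f x df -> is_derive g x dg ->
  is_derive (fun s => f s + g s)%C x (df + dg)%C.
Proof. exact (is_derive_plus f g x df dg). Qed.

Lemma is_derive_Cmult (f g : R -> C) (x : R) (df dg : C) :
  is_derive f x df -> is_derive g x dg ->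
  is_derive (fun s => f s * g s)%C x (df * g x + f x * dg)%C.
Proof.
  assert (Req : forall (h : R -> R) (l l' : R), is_derive h x l -> l = l' -> is_derive h x l')
    by (intros h l l' H ->; exact H).
  rewrite !is_derive_C; intros [F1 F2] [G1 G2]; split.
  - eapply Req; [apply (is_derive_minus _ _ _ _ _
      (is_derive_mult _ _ _ _ _ F1 G1 Rmult_comm)
      (is_derive_mult _ _ _ _ _ F2 G2 Rmult_comm)) |].
    unfold minus, plus, opp, mult; simpl; ring.
  - eapply Req; [apply (is_derive_plus _ _ _ _ _
      (is_derive_mult _ _ _ _ _ F1 G2 Rmult_comm)
      (is_derive_mult _ _ _ _ _ F2 G1 Rmult_comm)) |].
    unfold plus, mult; simpl; ring.
Qed.

Lemma is_derive_Cscal (k : C) (f : R -> C) (x : R) (df : C) :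
  is_derive f x df -> is_derive (fun s => k * f s)%C x (k * df)%C.
Proof.
  intros H. eapply is_derive_eq.
  - exact (is_derive_Cmult _ _ _ _ _ (is_derive_Cconst k x) H).
  - cbv beta; ring.
Qed.

Lemma is_derive_Cconj (f : R -> C) (x : R) (df : C) :
  is_derive f x df -> is_derive (fun s => Cconj (f s)) x (Cconj df).
Proof.
  rewrite !is_derive_C; intros [F1 F2]; split; [exact F1 |].
  exact (is_derive_opp _ _ _ F2).
Qed.

Lemma is_derive_csum (n : nat) (F : nat -> R -> C) (dF : nat -> C) (x : R) :
  (forall k, (k < n)%nat -> is_derive (F k) x (dF k)) ->
  is_derive (fun s => csum n (fun k => F k s)) x (csum n dF).
Proof.
  induction n as [| n IH]; intros H; simpl.
  - apply is_derive_Cconst.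
  - apply is_derive_Cplus; [apply IH; intros k Hk |]; apply H; lia.
Qed.

(** * Finite sums and 3x3 matrices *)

Lemma csum_ext (n : nat) (F G : nat -> C) :
  (forall k, (k < n)%nat -> F k = G k) -> csum n F = csum n G.
Proof.
  induction n as [| n IH]; intros H; simpl; [reflexivity |].
  rewrite IH, H; [reflexivity | lia | intros k Hk; apply H; lia].
Qed.

Lemma csum_plus (n : nat) (F G : nat -> C) :
  csum n (fun k => F k + G k)%C = (csum n F + csum n G)%C.
Proof. induction n as [| n IH]; simpl; [ring | rewrite IH; ring]. Qed.

Lemma csum_scale (n : nat) (k : C) (F : nat -> C) :
  csum n (fun j => k * F j)%C = (k * csum n F)%C.
Proof. induction n as [| n IH]; simpl; [ring | rewrite IH; ring]. Qed.

Lemma csum_conj (n : nat) (F : nat -> C) :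
  Cconj (csum n F) = csum n (fun k => Cconj (F k)).
Proof.
  induction n as [| n IH]; simpl; [apply Cconj_RtoC | rewrite Cplus_conj, IH; reflexivity].
Qed.

Definition skew (A : mat3) : Prop := forall a b, Cconj (A a b) = (- A b a)%C.

Definition column (ph : nat -> nat -> C) (al : nat) : nat -> C := fun c => ph c al.

Definition outer (v : nat -> C) : mat3 := fun a b => (v a * Cconj (v b))%C.

Definition gram (N : nat) (ph : nat -> nat -> C) : mat3 :=
  fun a b => csum N (fun al => outer (column ph al) a b).

Definition gram_lam (N : nat) (lams : nat -> R) (ph : nat -> nat -> C) : mat3 :=
  fun a b => csum N (fun al => RtoC (lams al) * outer (column ph al) a b)%C.

Lemma cinner_gram (N : nat) (ph : nat -> nat -> C) (i j : nat) :
  cinner N ph i j = gram N ph j i.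
Proof. apply csum_ext; intros; unfold outer, column; ring. Qed.

Definition hermitian (X : mat3) : Prop := forall a b, Cconj (X a b) = X b a.

Lemma gram_hermitian (N : nat) (ph : nat -> nat -> C) : hermitian (gram N ph).
Proof.
  intros a b; unfold gram; rewrite csum_conj; apply csum_ext; intros.
  unfold outer; push_conj; ring.
Qed.

Lemma gram_lam_hermitian (N : nat) (lams : nat -> R) (ph : nat -> nat -> C) :
  hermitian (gram_lam N lams ph).
Proof.
  intros a b; unfold gram_lam; rewrite csum_conj; apply csum_ext; intros.
  unfold outer; push_conj; ring.
Qed.

Lemma comm_add_r (A X Y : mat3) (a b : nat) :
  comm A (fun c d => X c d + Y c d)%C a b = (comm A X a b + comm A Y a b)%C.
Proof. unfold comm, mmul; cbn [csum]; ring. Qed.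

Lemma comm_scale_r (A X : mat3) (k : C) (a b : nat) :
  comm A (fun c d => k * X c d)%C a b = (k * comm A X a b)%C.
Proof. unfold comm, mmul; cbn [csum]; ring. Qed.

Lemma comm_add_l (A B X : mat3) (a b : nat) :
  comm (fun c d => A c d + B c d)%C X a b = (comm A X a b + comm B X a b)%C.
Proof. unfold comm, mmul; cbn [csum]; ring. Qed.

Lemma comm_scale_l (A X : mat3) (k : C) (a b : nat) :
  comm (fun c d => k * A c d)%C X a b = (k * comm A X a b)%C.
Proof. unfold comm, mmul; cbn [csum]; ring. Qed.

Lemma comm_csum_r (A : mat3) (N : nat) (X : nat -> mat3) (a b : nat) :
  comm A (fun c d => csum N (fun al => X al c d)) a b = csum N (fun al => comm A (X al) a b).
Proof.
  induction N as [| N IH]; simpl.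
  - unfold comm, mmul; cbn [csum]; ring.
  - rewrite <- IH; apply comm_add_r.
Qed.

Lemma comm_affine_l (W A K X : mat3) (k : C) (a b : nat) :
  (forall c d, W c d - A c d = k * K c d)%C ->
  comm W X a b = (comm A X a b + k * comm K X a b)%C.
Proof.
  intros H.
  assert (HW : forall c d, W c d = (A c d + k * K c d)%C)
    by (intros c d; rewrite <- H; ring).
  unfold comm, mmul; cbn [csum]; rewrite !HW; ring.
Qed.

Lemma comm_skew_hermitian (A X : mat3) (a b : nat) :
  skew A -> hermitian X -> Cconj (comm A X a b) = comm A X b a.
Proof.
  intros HA HX; unfold comm, mmul; cbn [csum]; push_conj.
  rewrite !HA, !HX; ring.
Qed.

(** * Differentiating L along a Lax system *)

Lemma is_derive_outer (h : nat -> R -> C) (A : mat3) (x : R) (a b : nat) :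
  skew A ->
  (forall c, (c < 3)%nat -> is_derive (h c) x (mvec A (fun c => h c x) c)) ->
  (a < 3)%nat -> (b < 3)%nat ->
  is_derive (fun s => outer (fun c => h c s) a b) x (comm A (outer (fun c => h c x)) a b).
Proof.
  intros HA Hh Ha Hb. eapply is_derive_eq.
  - apply is_derive_Cmult; [apply Hh, Ha | apply is_derive_Cconj, Hh, Hb].
  - unfold mvec, comm, mmul, outer; cbn [csum]; push_conj; rewrite !HA; ring.
Qed.

Section LaxFlow.

Variables (N : nat) (h : nat -> nat -> R -> C) (A : nat -> mat3) (x : R).
Hypothesis A_skew : forall al, (al < N)%nat -> skew (A al).
Hypothesis h_lax : forall al c, (al < N)%nat -> (c < 3)%nat ->
  is_derive (h c al) x (mvec (A al) (fun c => h c al x) c).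

Let ph_at (s : R) : nat -> nat -> C := fun c al => h c al s.

Lemma is_derive_outer_column (al a b : nat) :
  (al < N)%nat -> (a < 3)%nat -> (b < 3)%nat ->
  is_derive (fun s => outer (column (ph_at s) al) a b) x
    (comm (A al) (outer (column (ph_at x) al)) a b).
Proof.
  intros Hal Ha Hb.
  apply (is_derive_outer (fun c => h c al)); auto.
Qed.

Lemma is_derive_Lmat (lams : nat -> R) (lam : C) (a b : nat) :
  (a < 3)%nat -> (b < 3)%nat ->
  is_derive (fun s => Lmat N lams (ph_at s) lam a b) x
    (csum N (fun al => comm (A al) (outer (column (ph_at x) al)) a b
                       / (lam - RtoC (lams al))))%C.
Proof.
  intros Ha Hb. unfold Lmat. eapply is_derive_eq.
  - apply is_derive_Cplus; [apply is_derive_Cconst |].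
    apply is_derive_csum; intros al Hal.
    apply (is_derive_Cmult _ (fun _ => / (lam - RtoC (lams al)))%C);
      [apply (is_derive_outer_column al a b); auto | apply is_derive_Cconst].
  - ring_simplify. apply csum_ext; intros; unfold Cdiv; ring.
Qed.

Lemma is_derive_gram (a b : nat) :
  (a < 3)%nat -> (b < 3)%nat ->
  is_derive (fun s => gram N (ph_at s) a b) x
    (csum N (fun al => comm (A al) (outer (column (ph_at x) al)) a b)).
Proof.
  intros Ha Hb. apply is_derive_csum; intros al Hal.
  apply is_derive_outer_column; auto.
Qed.

End LaxFlow.

Definition Wx_slope : mat3 := mk3 Ci 0 0  0 Ci 0  0 0 0.

Definition Wy_slope : mat3 := mk3 Ci 0 0  0 (- Ci) 0  0 0 0.

Definition Wt_slope (lam u f g : C) : mat3 :=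
  mk3 (- (2 * Ci * lam)) (- (2 * u)) (- (2 * Ci * f))
      (2 * Cconj u) (2 * Ci * lam) (2 * Ci * g)
      (- (2 * Ci * Cconj f)) (2 * Ci * Cconj g) 0.

Ltac by_entries a b :=
  destruct a as [| [| [| a]]]; destruct b as [| [| [| b]]]; cbn; cring.

Lemma Wx_sub (lam mu f g : C) (c d : nat) :
  (Wx lam f g c d - Wx mu f g c d = (lam - mu) * Wx_slope c d)%C.
Proof. unfold Wx, Wx_slope, mk3; by_entries c d. Qed.

Lemma Wy_sub (lam mu u f g : C) (c d : nat) :
  (Wy lam u f g c d - Wy mu u f g c d = (lam - mu) * Wy_slope c d)%C.
Proof. unfold Wy, Wy_slope, mk3; by_entries c d. Qed.

Lemma Wt_sub (lam mu u uy f fy g gy : C) (v1 v2 : R) (c d : nat) :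
  (Wt lam u uy f fy g gy v1 v2 c d - Wt mu u uy f fy g gy v1 v2 c d
   = (lam - mu) * (Wt_slope lam u f g c d + (- (2) * mu) * Wy_slope c d))%C.
Proof. unfold Wt, Wt_slope, Wy_slope, mk3; by_entries c d. Qed.

Lemma Wy_slope_skew : skew Wy_slope.
Proof. intros a b; unfold Wy_slope, mk3; by_entries a b. Qed.

Lemma Wx_skew (la : R) (f g : C) : skew (Wx (RtoC la) f g).
Proof. intros a b; unfold Wx, mk3; by_entries a b. Qed.

Lemma Wy_skew (la : R) (u f g : C) : skew (Wy (RtoC la) u f g).
Proof. intros a b; unfold Wy, mk3; by_entries a b. Qed.

Lemma Wt_skew (la : R) (u uy f fy g gy : C) (v1 v2 : R) :
  skew (Wt (RtoC la) u uy f fy g gy v1 v2).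
Proof. intros a b; unfold Wt, mk3; by_entries a b. Qed.

(** * The defect [W(lambda), L] - dL *)

Lemma comm_Lmat (N : nat) (lams : nat -> R) (ph : nat -> nat -> C) (lam : C)
    (W : mat3) (A K : nat -> mat3) (a b : nat) :
  (forall al, (al < N)%nat -> lam <> RtoC (lams al)) ->
  (forall al c d, (al < N)%nat ->
     W c d - A al c d = (lam - RtoC (lams al)) * K al c d)%C ->
  comm W (Lmat N lams ph lam) a b =
  (csum N (fun al => comm (A al) (outer (column ph al)) a b / (lam - RtoC (lams al)))
   + (comm W Cdiag a b + csum N (fun al => comm (K al) (outer (column ph al)) a b)))%C.
Proof.
  intros Hlam HK.
  change (Lmat N lams ph lam) with (fun c d => Cdiag c d +
    csum N (fun al => outer (column ph al) c d / (lam - RtoC (lams al))))%C.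
  rewrite comm_add_r, comm_csum_r.
  rewrite (csum_ext N _ (fun al => comm (A al) (outer (column ph al)) a b
      / (lam - RtoC (lams al)) + comm (K al) (outer (column ph al)) a b)%C).
  - rewrite csum_plus; ring.
  - intros al Hal.
    assert (Hnz : (lam - RtoC (lams al) <> 0)%C).
    { intros E; apply (Hlam al Hal).
      replace lam with (lam - RtoC (lams al) + RtoC (lams al))%C by ring.
      rewrite E; ring. }
    transitivity (comm W (outer (column ph al)) a b / (lam - RtoC (lams al)))%C.
    { unfold comm, mmul, Cdiv; cbn [csum]; ring. }
    rewrite (comm_affine_l _ _ _ _ _ a b (fun c d => HK al c d Hal)).
    field; exact Hnz.
Qed.

Definition defect_x (lam f g : C) (M : mat3) (a b : nat) : C :=
  (comm (Wx lam f g) Cdiag a b + comm Wx_slope M a b)%C.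

Definition defect_y (lam u f g : C) (M : mat3) (a b : nat) : C :=
  (comm (Wy lam u f g) Cdiag a b + comm Wy_slope M a b)%C.

Definition defect_t (lam u uy f fy g gy : C) (v1 v2 : R) (M M1 : mat3) (a b : nat) : C :=
  (comm (Wt lam u uy f fy g gy v1 v2) Cdiag a b + comm (Wt_slope lam u f g) M a b
   - 2 * comm Wy_slope M1 a b)%C.

Lemma csum_comm_outer (N : nat) (ph : nat -> nat -> C) (K : mat3) (a b : nat) :
  csum N (fun al => comm K (outer (column ph al)) a b) = comm K (gram N ph) a b.
Proof. unfold gram; rewrite comm_csum_r; reflexivity. Qed.

Lemma csum_comm_outer_lam (N : nat) (lams : nat -> R) (ph : nat -> nat -> C)
    (K : mat3) (a b : nat) :
  csum N (fun al => RtoC (lams al) * comm K (outer (column ph al)) a b)%C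
  = comm K (gram_lam N lams ph) a b.
Proof.
  unfold gram_lam; rewrite comm_csum_r.
  apply csum_ext; intros; rewrite comm_scale_r; reflexivity.
Qed.

Section Defects.

Variables (N : nat) (lams : nat -> R) (ph : nat -> nat -> C) (lam : C) (a b : nat).
Hypothesis lam_regular : forall al, (al < N)%nat -> lam <> RtoC (lams al).

Let dL (W : C -> mat3) : C :=
  csum N (fun al => comm (W (RtoC (lams al))) (outer (column ph al)) a b
                    / (lam - RtoC (lams al)))%C.

Lemma comm_Wx_Lmat (f g : C) :
  comm (Wx lam f g) (Lmat N lams ph lam) a b
  = (dL (fun mu => Wx mu f g) + defect_x lam f g (gram N ph) a b)%C.
Proof.
  rewrite (comm_Lmat N lams ph lam _ (fun al => Wx (RtoC (lams al)) f g)
    (fun _ => Wx_slope)); auto.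
  - unfold defect_x; rewrite csum_comm_outer; reflexivity.
  - intros; apply Wx_sub.
Qed.

Lemma comm_Wy_Lmat (u f g : C) :
  comm (Wy lam u f g) (Lmat N lams ph lam) a b
  = (dL (fun mu => Wy mu u f g) + defect_y lam u f g (gram N ph) a b)%C.
Proof.
  rewrite (comm_Lmat N lams ph lam _ (fun al => Wy (RtoC (lams al)) u f g)
    (fun _ => Wy_slope)); auto.
  - unfold defect_y; rewrite csum_comm_outer; reflexivity.
  - intros; apply Wy_sub.
Qed.

Lemma comm_Wt_Lmat (u uy f fy g gy : C) (v1 v2 : R) :
  comm (Wt lam u uy f fy g gy v1 v2) (Lmat N lams ph lam) a b
  = (dL (fun mu => Wt mu u uy f fy g gy v1 v2)
     + defect_t lam u uy f fy g gy v1 v2 (gram N ph) (gram_lam N lams ph) a b)%C.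
Proof.
  rewrite (comm_Lmat N lams ph lam _
    (fun al => Wt (RtoC (lams al)) u uy f fy g gy v1 v2)
    (fun al c d => Wt_slope lam u f g c d + (- (2) * RtoC (lams al)) * Wy_slope c d)%C);
    auto.
  - rewrite (csum_ext N (fun al => comm (fun c d => Wt_slope lam u f g c d
        + (- (2) * RtoC (lams al)) * Wy_slope c d)%C (outer (column ph al)) a b)
      (fun al => comm (Wt_slope lam u f g) (outer (column ph al)) a b
        + - (2) * (RtoC (lams al) * comm Wy_slope (outer (column ph al)) a b))%C).
    + rewrite csum_plus, csum_comm_outer.
      rewrite csum_scale, csum_comm_outer_lam.
      unfold defect_t, dL; ring.
    + intros; rewrite comm_add_l, comm_scale_l; ring.
  - intros; apply Wt_sub.
Qed.

End Defects.

Lemma defect_x_02 (lam f g : C) (M : mat3) :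
  defect_x lam f g M 0 2 = 0%C <-> M 0%nat 2%nat = f.
Proof.
  replace (defect_x lam f g M 0 2) with (Ci * (M 0%nat 2%nat - f))%C
    by (unfold defect_x, Wx, Wx_slope, Cdiag, comm, mmul, mk3; cbn; cring).
  split; intros H.
  - apply Cmult_eq0_l in H; [| exact Ci_nz].
    replace (M 0%nat 2%nat) with (f + (M 0%nat 2%nat - f))%C by ring; rewrite H; ring.
  - rewrite H; ring.
Qed.

Lemma defect_x_12 (lam f g : C) (M : mat3) :
  defect_x lam f g M 1 2 = 0%C <-> M 1%nat 2%nat = (- g)%C.
Proof.
  replace (defect_x lam f g M 1 2) with (Ci * (M 1%nat 2%nat + g))%C
    by (unfold defect_x, Wx, Wx_slope, Cdiag, comm, mmul, mk3; cbn; cring).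
  split; intros H.
  - apply Cmult_eq0_l in H; [| exact Ci_nz].
    replace (M 1%nat 2%nat) with (M 1%nat 2%nat + g - g)%C by ring; rewrite H; ring.
  - rewrite H; ring.
Qed.

Lemma defect_y_01 (lam u f g : C) (M : mat3) :
  defect_y lam u f g M 0 1 = 0%C <-> M 0%nat 1%nat = (- (Ci * u))%C.
Proof.
  replace (defect_y lam u f g M 0 1) with (2 * Ci * (M 0%nat 1%nat + Ci * u))%C
    by (unfold defect_y, Wy, Wy_slope, Cdiag, comm, mmul, mk3; cbn; cring).
  split; intros H.
  - apply Cmult_eq0_l in H; [| intros E; apply (f_equal snd) in E; simpl in E; lra].
    replace (M 0%nat 1%nat) with (M 0%nat 1%nat + Ci * u - Ci * u)%C by ring; rewrite H; ring.
  - rewrite H; ring.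
Qed.

Section Constraints.

Variables (u f g : C) (M : mat3).
Hypothesis M_hermitian : hermitian M.
Hypothesis M01 : M 0%nat 1%nat = (- (Ci * u))%C.
Hypothesis M02 : M 0%nat 2%nat = f.
Hypothesis M12 : M 1%nat 2%nat = (- g)%C.

Ltac subst_M :=
  rewrite <- ?(M_hermitian 0%nat 1%nat), <- ?(M_hermitian 0%nat 2%nat),
    <- ?(M_hermitian 1%nat 2%nat),
    ?M01, ?M02, ?M12.

Lemma defect_x_vanishes (lam : C) (a b : nat) :
  (a < 3)%nat -> (b < 3)%nat -> defect_x lam f g M a b = 0%C.
Proof.
  intros Ha Hb; unfold defect_x, Wx, Wx_slope, Cdiag, comm, mmul, mk3.
  destruct a as [| [| [| a]]]; try lia; destruct b as [| [| [| b]]]; try lia;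
    cbn [csum]; subst_M; cring.
Qed.

Lemma defect_y_vanishes (lam : C) (a b : nat) :
  (a < 3)%nat -> (b < 3)%nat -> defect_y lam u f g M a b = 0%C.
Proof.
  intros Ha Hb; unfold defect_y, Wy, Wy_slope, Cdiag, comm, mmul, mk3.
  destruct a as [| [| [| a]]]; try lia; destruct b as [| [| [| b]]]; try lia;
    cbn [csum]; subst_M; cring.
Qed.

Variables (uy fy gy : C) (v1 v2 : R) (M1 : mat3).
Hypothesis M1_hermitian : hermitian M1.

(* The entries of the y-derivative of M given by the y-system. *)
Let dM (a b : nat) : C := (comm (Wy 0 u f g) M a b + comm Wy_slope M1 a b)%C.
Hypothesis dM01 : dM 0 1 = (- (Ci * uy))%C.
Hypothesis dM02 : dM 0 2 = fy.
Hypothesis dM12 : dM 1 2 = (- gy)%C.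

Lemma comm_Wy_slope_of_dM (a b : nat) (K : C) :
  dM a b = K ->
  comm Wy_slope M1 a b = (K - comm (Wy 0 u f g) M a b)%C /\
  comm Wy_slope M1 b a = (Cconj K - comm (Wy 0 u f g) M b a)%C.
Proof.
  intros HK; split.
  - rewrite <- HK; unfold dM; ring.
  - rewrite <- HK; unfold dM; rewrite Cplus_conj, !comm_skew_hermitian;
      [ring | apply Wy_slope_skew | exact M1_hermitian | apply Wy_skew | exact M_hermitian].
Qed.

Lemma defect_t_vanishes (lam : C) (a b : nat) :
  (a < 3)%nat -> (b < 3)%nat -> defect_t lam u uy f fy g gy v1 v2 M M1 a b = 0%C.
Proof.
  intros Ha Hb.
  destruct (comm_Wy_slope_of_dM 0 1 _ dM01) as [E01 E10].
  destruct (comm_Wy_slope_of_dM 0 2 _ dM02) as [E02 E20].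
  destruct (comm_Wy_slope_of_dM 1 2 _ dM12) as [E12 E21].
  unfold defect_t.
  destruct a as [| [| [| a]]]; try lia; destruct b as [| [| [| b]]]; try lia;
    rewrite ?E01, ?E10, ?E02, ?E20, ?E12, ?E21;
    unfold Wt, Wt_slope, Wy, Wy_slope, Cdiag, comm, mmul, mk3, csq; cbn [csum];
    subst_M; iring.
Qed.

End Constraints.

Lemma open3_slice_y (D : R -> R -> R -> Prop) (x y t : R) :
  open3 D -> D x y t -> locally y (fun s => D x s t).
Proof.
  intros HD Hp. destruct (HD ((x, y), t) Hp) as [eps He].
  exists eps; intros s Hs. apply (He ((x, s), t)).
  split; [split |]; simpl; auto; apply ball_center.
Qed.

Section LaxSystem.

Variables (N : nat) (lams : nat -> R) (D : R -> R -> R -> Prop).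
Variables (u f g uy fy gy : R -> R -> R -> C) (v1 v2 : R -> R -> R -> R).
Variable phi : nat -> nat -> R -> R -> R -> C.

Hypothesis HFx : forall al a x y t, (al < N)%nat -> (a < 3)%nat -> D x y t ->
  has_pdx (phi a al) x y t
    (mvec (Wx (RtoC (lams al)) (f x y t) (g x y t)) (fun c => phi c al x y t) a).
Hypothesis HFy : forall al a x y t, (al < N)%nat -> (a < 3)%nat -> D x y t ->
  has_pdy (phi a al) x y t
    (mvec (Wy (RtoC (lams al)) (u x y t) (f x y t) (g x y t)) (fun c => phi c al x y t) a).
Hypothesis HFt : forall al a x y t, (al < N)%nat -> (a < 3)%nat -> D x y t ->
  has_pdt (phi a al) x y t
    (mvec (Wt (RtoC (lams al)) (u x y t) (uy x y t) (f x y t) (fy x y t)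
              (g x y t) (gy x y t) (v1 x y t) (v2 x y t))
          (fun c => phi c al x y t) a).

Let M (x y t : R) : mat3 := gram N (at_pt phi x y t).
Let M1 (x y t : R) : mat3 := gram_lam N lams (at_pt phi x y t).

Section AtPoint.

Variables (x y t : R) (lam : C) (a b : nat).
Hypothesis Hp : D x y t.
Hypothesis lam_regular : forall al, (al < N)%nat -> lam <> RtoC (lams al).
Hypothesis Ha : (a < 3)%nat.
Hypothesis Hb : (b < 3)%nat.

Lemma lax_x_iff :
  has_pdx (Lfun N lams phi lam a b) x y t
    (comm (Wx lam (f x y t) (g x y t)) (Lmat N lams (at_pt phi x y t) lam) a b)
  <-> defect_x lam (f x y t) (g x y t) (M x y t) a b = 0%C.
Proof.
  rewrite comm_Wx_Lmat by exact lam_regular.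
  apply is_derive_shift_iff.
  apply (is_derive_Lmat N (fun c al s => phi c al s y t)
    (fun al => Wx (RtoC (lams al)) (f x y t) (g x y t))); auto.
  - intros; apply Wx_skew.
  - intros al c Hal Hc; exact (HFx al c x y t Hal Hc Hp).
Qed.

Lemma lax_y_iff :
  has_pdy (Lfun N lams phi lam a b) x y t
    (comm (Wy lam (u x y t) (f x y t) (g x y t)) (Lmat N lams (at_pt phi x y t) lam) a b)
  <-> defect_y lam (u x y t) (f x y t) (g x y t) (M x y t) a b = 0%C.
Proof.
  rewrite comm_Wy_Lmat by exact lam_regular.
  apply is_derive_shift_iff.
  apply (is_derive_Lmat N (fun c al s => phi c al x s t)
    (fun al => Wy (RtoC (lams al)) (u x y t) (f x y t) (g x y t))); auto.
  - intros; apply Wy_skew.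
  - intros al c Hal Hc; exact (HFy al c x y t Hal Hc Hp).
Qed.

Lemma lax_t_iff :
  has_pdt (Lfun N lams phi lam a b) x y t
    (comm (Wt lam (u x y t) (uy x y t) (f x y t) (fy x y t) (g x y t) (gy x y t)
              (v1 x y t) (v2 x y t))
          (Lmat N lams (at_pt phi x y t) lam) a b)
  <-> defect_t lam (u x y t) (uy x y t) (f x y t) (fy x y t) (g x y t) (gy x y t)
        (v1 x y t) (v2 x y t) (M x y t) (M1 x y t) a b = 0%C.
Proof.
  rewrite comm_Wt_Lmat by exact lam_regular.
  apply is_derive_shift_iff.
  apply (is_derive_Lmat N (fun c al s => phi c al x y s)
    (fun al => Wt (RtoC (lams al)) (u x y t) (uy x y t) (f x y t) (fy x y t)
                  (g x y t) (gy x y t) (v1 x y t) (v2 x y t))); auto.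
  - intros; apply Wt_skew.
  - intros al c Hal Hc; exact (HFt al c x y t Hal Hc Hp).
Qed.

End AtPoint.

Lemma gram_y_derivative (x y t : R) (a b : nat) :
  D x y t -> (a < 3)%nat -> (b < 3)%nat ->
  is_derive (fun s => M x s t a b) y
    (comm (Wy 0 (u x y t) (f x y t) (g x y t)) (M x y t) a b
     + comm Wy_slope (M1 x y t) a b)%C.
Proof.
  intros Hp Ha Hb. eapply is_derive_eq.
  - apply (is_derive_gram N (fun c al s => phi c al x s t)
      (fun al => Wy (RtoC (lams al)) (u x y t) (f x y t) (g x y t))); auto.
    + intros; apply Wy_skew.
    + intros al c Hal Hc; exact (HFy al c x y t Hal Hc Hp).
  - unfold M, M1. rewrite <- csum_comm_outer, <- csum_comm_outer_lam, <- csum_plus.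
    apply csum_ext; intros al Hal.
    rewrite (comm_affine_l (Wy (RtoC (lams al)) (u x y t) (f x y t) (g x y t))
      (Wy 0 (u x y t) (f x y t) (g x y t)) Wy_slope _ (RtoC (lams al) - RtoC 0)%C);
      [unfold at_pt; ring |].
    intros; apply Wy_sub.
Qed.

Lemma gram_y_derivative_eq (x y t : R) (a b : nat) (G : R -> C) (dG : C) :
  D x y t -> (a < 3)%nat -> (b < 3)%nat ->
  locally y (fun s => M x s t a b = G s) -> is_derive G y dG ->
  (comm (Wy 0 (u x y t) (f x y t) (g x y t)) (M x y t) a b
   + comm Wy_slope (M1 x y t) a b)%C = dG.
Proof.
  intros Hp Ha Hb HG HdG.
  apply (is_derive_Cunique (fun s => M x s t a b) y); [exact (gram_y_derivative x y t a b Hp Ha Hb) |].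
  apply (is_derive_ext_loc G); [| exact HdG].
  eapply filter_imp; [| exact HG]; intros s Hs; symmetry; exact Hs.
Qed.

Hypothesis HD : open3 D.
Hypothesis Huy : forall x y t, D x y t -> has_pdy u x y t (uy x y t).
Hypothesis Hfy : forall x y t, D x y t -> has_pdy f x y t (fy x y t).
Hypothesis Hgy : forall x y t, D x y t -> has_pdy g x y t (gy x y t).
Hypothesis gram_constraints : forall x y t, D x y t ->
  M x y t 0%nat 1%nat = (- (Ci * u x y t))%C /\ M x y t 0%nat 2%nat = f x y t
  /\ M x y t 1%nat 2%nat = (- g x y t)%C.

Lemma constrained_y_derivative (x y t : R) (a b : nat) (h : R -> R -> R -> C) (dh : C) (k : C) :
  D x y t -> (a < 3)%nat -> (b < 3)%nat ->
  (forall x y t, D x y t -> M x y t a b = (k * h x y t)%C) ->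
  has_pdy h x y t dh ->
  (comm (Wy 0 (u x y t) (f x y t) (g x y t)) (M x y t) a b
   + comm Wy_slope (M1 x y t) a b)%C = (k * dh)%C.
Proof.
  intros Hp Ha Hb Hh Hdh.
  apply (gram_y_derivative_eq x y t a b (fun s => k * h x s t)%C); auto.
  - eapply filter_imp; [| exact (open3_slice_y D x y t HD Hp)].
    intros s Hs; exact (Hh x s t Hs).
  - exact (is_derive_Cscal k _ y dh Hdh).
Qed.

Lemma y_derivative_constraints (x y t : R) : D x y t ->
  (comm (Wy 0 (u x y t) (f x y t) (g x y t)) (M x y t) 0%nat 1%nat
   + comm Wy_slope (M1 x y t) 0%nat 1%nat = - (Ci * uy x y t))%C /\
  (comm (Wy 0 (u x y t) (f x y t) (g x y t)) (M x y t) 0%nat 2%nat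
   + comm Wy_slope (M1 x y t) 0%nat 2%nat = fy x y t)%C /\
  (comm (Wy 0 (u x y t) (f x y t) (g x y t)) (M x y t) 1%nat 2%nat
   + comm Wy_slope (M1 x y t) 1%nat 2%nat = - gy x y t)%C.
Proof.
  intros Hp; split; [| split].
  - transitivity (- Ci * uy x y t)%C; [| ring].
    apply (constrained_y_derivative x y t 0 1 u); auto.
    intros x' y' t' Hp'; rewrite (proj1 (gram_constraints x' y' t' Hp')); ring.
  - transitivity (1 * fy x y t)%C; [| ring].
    apply (constrained_y_derivative x y t 0 2 f); auto.
    intros x' y' t' Hp'; rewrite (proj1 (proj2 (gram_constraints x' y' t' Hp'))); ring.
  - transitivity (- (1) * gy x y t)%C; [| ring].
    apply (constrained_y_derivative x y t 1 2 g); auto.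
    intros x' y' t' Hp'; rewrite (proj2 (proj2 (gram_constraints x' y' t' Hp'))); ring.
Qed.

End LaxSystem.
Theorem lemma1
  (N : nat) (HN : (1 <= N)%nat)
  (lams : nat -> R)
  (Hdist : forall al be, (al < N)%nat -> (be < N)%nat -> al <> be -> lams al <> lams be)
  (Hnz : forall al, (al < N)%nat -> lams al <> 0)
  (D : R -> R -> R -> Prop) (HD : open3 D)
  (u f g uy fy gy : R -> R -> R -> C) (v1 v2 : R -> R -> R -> R)
  (Huy : forall x y t, D x y t -> has_pdy u x y t (uy x y t))
  (Hfy : forall x y t, D x y t -> has_pdy f x y t (fy x y t))
  (Hgy : forall x y t, D x y t -> has_pdy g x y t (gy x y t))
  (phi : nat -> nat -> R -> R -> R -> C)
  (HFx : forall al a x y t, (al < N)%nat -> (a < 3)%nat -> D x y t ->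
     has_pdx (phi a al) x y t
       (mvec (Wx (RtoC (lams al)) (f x y t) (g x y t))
             (fun c => phi c al x y t) a))
  (HFy : forall al a x y t, (al < N)%nat -> (a < 3)%nat -> D x y t ->
     has_pdy (phi a al) x y t
       (mvec (Wy (RtoC (lams al)) (u x y t) (f x y t) (g x y t))
             (fun c => phi c al x y t) a))
  (HFt : forall al a x y t, (al < N)%nat -> (a < 3)%nat -> D x y t ->
     has_pdt (phi a al) x y t
       (mvec (Wt (RtoC (lams al)) (u x y t) (uy x y t) (f x y t) (fy x y t)
                 (g x y t) (gy x y t) (v1 x y t) (v2 x y t))
             (fun c => phi c al x y t) a)) :
  (forall x y t, D x y t ->
   forall lam : C, (forall al, (al < N)%nat -> lam <> RtoC (lams al)) ->
   forall a b, (a < 3)%nat -> (b < 3)%nat ->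
     has_pdx (Lfun N lams phi lam a b) x y t
       (comm (Wx lam (f x y t) (g x y t))
             (Lmat N lams (at_pt phi x y t) lam) a b)
  /\ has_pdy (Lfun N lams phi lam a b) x y t
       (comm (Wy lam (u x y t) (f x y t) (g x y t))
             (Lmat N lams (at_pt phi x y t) lam) a b)
  /\ has_pdt (Lfun N lams phi lam a b) x y t
       (comm (Wt lam (u x y t) (uy x y t) (f x y t) (fy x y t)
                 (g x y t) (gy x y t) (v1 x y t) (v2 x y t))
             (Lmat N lams (at_pt phi x y t) lam) a b))
  <->
  (forall x y t, D x y t ->
     cinner N (at_pt phi x y t) 1 0 = Copp (Cmult Ci (u x y t))
  /\ cinner N (at_pt phi x y t) 2 0 = f x y t
  /\ cinner N (at_pt phi x y t) 2 1 = Copp (g x y t)).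
Proof.
  split.
  - intros Hlax x y t Hp.
    (* Any non-real lambda will do. *)
    assert (Hreg : forall al, (al < N)%nat -> Ci <> RtoC (lams al))
      by (intros; apply Ci_neq_RtoC).
    assert (Hx : forall a b, (a < 3)%nat -> (b < 3)%nat ->
      defect_x Ci (f x y t) (g x y t) (gram N (at_pt phi x y t)) a b = 0%C)
      by (intros a b Ha Hb; eapply lax_x_iff; eauto; apply (Hlax x y t Hp Ci Hreg a b Ha Hb)).
    assert (Hy : forall a b, (a < 3)%nat -> (b < 3)%nat ->
      defect_y Ci (u x y t) (f x y t) (g x y t) (gram N (at_pt phi x y t)) a b = 0%C)
      by (intros a b Ha Hb; eapply lax_y_iff; eauto; apply (Hlax x y t Hp Ci Hreg a b Ha Hb)).
    rewrite !cinner_gram; split; [| split].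
    + apply (defect_y_01 Ci _ (f x y t) (g x y t)), Hy; lia.
    + apply (defect_x_02 Ci _ (g x y t)), Hx; lia.
    + apply (defect_x_12 Ci (f x y t)), Hx; lia.
  - intros Hcon.
    assert (Hgram : forall x y t, D x y t ->
      gram N (at_pt phi x y t) 0%nat 1%nat = (- (Ci * u x y t))%C
      /\ gram N (at_pt phi x y t) 0%nat 2%nat = f x y t
      /\ gram N (at_pt phi x y t) 1%nat 2%nat = (- g x y t)%C)
      by (intros x y t Hp; rewrite <- !cinner_gram; exact (Hcon x y t Hp)).
    intros x y t Hp lam Hreg a b Ha Hb.
    destruct (Hgram x y t Hp) as [M01 [M02 M12]].
    destruct (y_derivative_constraints N lams D u f g uy fy gy phi HFy HD Huy Hfy Hgy Hgram
      x y t Hp) as [dM01 [dM02 dM12]].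
    split; [| split].
    + eapply lax_x_iff; eauto. apply (defect_x_vanishes (u x y t)); auto using gram_hermitian.
    + eapply lax_y_iff; eauto. apply defect_y_vanishes; auto using gram_hermitian.
    + eapply lax_t_iff; eauto.
      apply defect_t_vanishes; auto using gram_hermitian, gram_lam_hermitian.
Qed.
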